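(* Let $r = 2^4 + 2^3 + 2 + 1 = 27$ and $p = 2^{64} \oplus r$. As $x$ ranges over all nonnegative integers of degree less than $128$ (i.e. $x < 2^{128}$), the quantity $\big((z \div 2^{64}) \star 2^{64}\big) \bmod p$, where $z = (x \div 2^{64}) \star r$, takes only $16$ possible values.
   Context: All operations are carry-less. For nonnegative integers $a,b$, with $a_i$ the $i$-th least significant bit of $a$, the carry-less product $a \star b$ is the integer whose $i$-th bit is $\bigoplus_{k=0}^{i} a_{i-k} b_k$; $\oplus$ is bitwise XOR. For a positive integer $x$, $\mathrm{degree}(x)$ is the index (starting at $0$) of its most significant nonzero bit. For integers $a$ and $b \neq 0$ there are unique integers $\alpha,\beta$ with $a = \alpha \star b \oplus \beta$ and $\beta = 0$ or $\mathrm{degree}(\beta) < \mathrm{degree}(b)$; one writes $a \div b = \alpha$ and $a \bmod b = \beta$. Precedence: $\star$, $\bmod$, $\div$ first, then $\oplus$. *)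

From mathcomp Require Import all_boot.
From Stdlib Require Import PeanoNat.

Set Implicit Arguments.
Unset Strict Implicit.
Unset Printing Implicit Defensive.

Definition bit (a i : nat) : bool := Nat.testbit a i.

Definition xorn (a b : nat) : nat := Nat.lxor a b.

Definition degree (x : nat) : nat := Nat.log2 x.

(* Carry-less product, literally: bit i of (a * b) is
   XOR_{k=0..i} a_{i-k} b_k.  All bits of index >= a + b + 1 vanish,
   since degree a + degree b < a + b + 1, so the finite sum is exact. *)
Definition clmul (a b : nat) : nat :=
  \sum_(0 <= i < a + b + 1)
     (\big[xorb/false]_(0 <= k < i.+1) (bit a (i - k) && bit b k)) * 2 ^ i.

(* Carry-less Euclidean division by schoolbook long division:
   scanning positions d+m (d = degree b) from high to low, whenever the
   current remainder has bit d+m set, xor in b * 2^m (= b shifted by m)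
   and set bit m of the quotient. *)
Fixpoint cldm_aux (n b d : nat) (qr : nat * nat) : nat * nat :=
  match n with
  | 0 => qr
  | m.+1 =>
      let q := qr.1 in let r := qr.2 in
      let qr' := if bit r (d + m)
                 then (Nat.lor q (2 ^ m), xorn r (b * 2 ^ m))
                 else (q, r) in
      cldm_aux m b d qr'
  end.

(* (a div b, a mod b); for b = 0 the value is irrelevant (set to (0, a)). *)
Definition cldivmod (a b : nat) : nat * nat :=
  if b == 0 then (0, a) else cldm_aux a.+1 b (degree b) (0, a).

Definition cldiv (a b : nat) : nat := (cldivmod a b).1.
Definition clmod (a b : nat) : nat := (cldivmod a b).2.

Definition r_const : nat := 2 ^ 4 + 2 ^ 3 + 2 + 1.
Definition p_const : nat := xorn (2 ^ 64) r_const.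

Definition fold_val (x : nat) : nat :=
  let z := clmul (cldiv x (2 ^ 64)) r_const in
  clmod (clmul (cldiv z (2 ^ 64)) (2 ^ 64)) p_const.

From Stdlib Require Import PeanoNat.
From mathcomp Require Import all_boot zify.

Set Implicit Arguments.
Unset Strict Implicit.
Unset Printing Implicit Defensive.

(* Since r has degree 4, the bits of z = (x div 2^64) * r at positions >= 64
   only involve the top 4 bits of x, so fold_val x = fold_nibble (x div 2^124)
   takes at most 16 values.  For t = z div 2^64, of degree < 4, the long
   division of t * 2^64 by p = 2^64 + r xors in r * 2^m exactly when bit m of
   t is set, and these steps never touch bits >= 64; hence the low 64 bits of
   (t * 2^64) mod p are those of t * r.  The 16 candidate values already
   differ in their lowest 4 bits, which is a finite computation. *)

Lemma expnE m n : m ^ n = Nat.pow m n.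
Proof. by elim: n => //= n IH; rewrite expnS IH. Qed.

Lemma divnE m d : m %/ d = Nat.div m d.
Proof.
case: d => [|d]; first by rewrite divn0.
apply: (Nat.div_unique _ _ _ (m %% d.+1)); first by apply/ltP; rewrite ltn_pmod.
by rewrite {1}(divn_eq m d.+1) mulnC.
Qed.

Lemma ltn_mul_pow2 c m n : c < 2 ^ m -> c * 2 ^ n < 2 ^ (m + n).
Proof. by rewrite expnD ltn_pmul2r // expn_gt0. Qed.

Lemma ltn_divn_pow2 x m n : x < 2 ^ (m + n) -> x %/ 2 ^ n < 2 ^ m.
Proof. by rewrite ltn_divLR ?expn_gt0 // -expnD. Qed.

Lemma bit_inj a b : (forall i, bit a i = bit b i) -> a = b.
Proof. exact: Nat.bits_inj. Qed.

Lemma bit0n i : bit 0 i = false.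
Proof. exact: Nat.bits_0. Qed.

Lemma bit_xorn a b i : bit (xorn a b) i = bit a i (+) bit b i.
Proof. by rewrite /bit /xorn Nat.lxor_spec; case: Nat.testbit; case: Nat.testbit. Qed.

Lemma bit_lor a b i : bit (Nat.lor a b) i = bit a i || bit b i.
Proof. exact: Nat.lor_spec. Qed.

Lemma bit_pow2 n i : bit (2 ^ n) i = (i == n).
Proof.
rewrite /bit expnE Nat.pow2_bits_eqb; case: Nat.eqb_spec => [->|ne]; first by rewrite eqxx.
by apply/esym/eqP => ein; apply: ne.
Qed.

Lemma bit_mul_pow2 a n i : bit (a * 2 ^ n) i = (n <= i) && bit a (i - n).
Proof.
rewrite /bit expnE; case: leqP => hni.
- by rewrite Nat.mul_pow2_bits_high //; lia.
- by rewrite Nat.mul_pow2_bits_low //; lia.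
Qed.

Lemma bit_divn_pow2 a n i : bit (a %/ 2 ^ n) i = bit a (i + n).
Proof. by rewrite /bit divnE expnE Nat.div_pow2_bits. Qed.

Lemma bit_small a n i : a < 2 ^ n -> n <= i -> bit a i = false.
Proof.
case: a => [|a] ha hni; first exact: bit0n.
apply: Nat.bits_above_log2.
have : (Nat.log2 a.+1 < n)%coq_nat.
  by apply/Nat.log2_lt_pow2; [lia | rewrite -expnE; apply/ltP].
lia.
Qed.

Lemma bit_ge a i : a <= i -> bit a i = false.
Proof. by move=> hai; apply: (@bit_small _ i) => //; exact: leq_ltn_trans hai (ltn_expl i _). Qed.

Lemma ltn_pow2_bits a n : (forall i, n <= i -> bit a i = false) -> a < 2 ^ n.
Proof.
move=> ha; have -> : a = Nat.modulo a (Nat.pow 2 n).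
  apply: bit_inj => i; rewrite /bit; case: (leqP n i) => hni.
  - by rewrite Nat.mod_pow2_bits_high; [exact: ha | lia].
  - by rewrite Nat.mod_pow2_bits_low //; lia.
by rewrite expnE; apply/ltP/Nat.mod_upper_bound/Nat.pow_nonzero.
Qed.

Lemma addn_mul_pow2 a b n : a < 2 ^ n -> a + b * 2 ^ n = xorn a (b * 2 ^ n).
Proof.
move=> ha; apply: Nat.add_nocarry_lxor; apply: Nat.bits_inj_0 => i.
rewrite Nat.land_spec; change (bit a i && bit (b * 2 ^ n) i = false).
rewrite bit_mul_pow2; case: (leqP n i) => hni; last by rewrite andbF.
by rewrite (bit_small ha hni).
Qed.

Lemma sum_pow2_lt (f : nat -> bool) N : \sum_(0 <= i < N) f i * 2 ^ i < 2 ^ N.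
Proof.
elim: N => [|N IH]; first by rewrite big_geq.
rewrite big_nat_recr //= expnS mul2n -addnn.
have : f N * 2 ^ N <= 2 ^ N by case: (f N); rewrite ?mul1n ?mul0n.
lia.
Qed.

Lemma bit_sum_pow2 (f : nat -> bool) N j :
  bit (\sum_(0 <= i < N) f i * 2 ^ i) j = (j < N) && f j.
Proof.
elim: N j => [|N IH] j; first by rewrite big_geq // bit0n.
rewrite big_nat_recr //= addn_mul_pow2 ?sum_pow2_lt // bit_xorn IH bit_mul_pow2.
case: (ltngtP j N) => [ltjN|ltNj|->] /=.
- by rewrite addbF ltnS ltnW.
- by rewrite ltnS leqNgt ltNj bit_ge //; case: (f N) => /=; lia.
- by rewrite ltnSn subnn; case: (f N).
Qed.

Lemma big_xorbE (F : nat -> bool) r :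
  \big[xorb/false]_(i <- r) F i = \big[addb/false]_(i <- r) F i.
Proof. by elim/big_rec2: _ => // i x y _ ->; case: (F i); case: y. Qed.

Lemma big_addb_nat_tail (F : nat -> bool) n1 n2 :
  (forall k, minn n1 n2 <= k -> F k = false) ->
  \big[addb/false]_(0 <= k < n1) F k = \big[addb/false]_(0 <= k < n2) F k.
Proof.
move=> hF; wlog le12 : n1 n2 hF / n1 <= n2.
  move=> hw; case: (leqP n1 n2) => h; first exact: hw.
  by symmetry; apply: hw (ltnW h); rewrite minnC.
rewrite [RHS](@big_cat_nat _ _ _ n1) //= [X in addb _ X]big1_seq ?addbF // => k /andP[_].
by rewrite mem_index_iota => /andP[hk _]; apply: hF; rewrite (minn_idPl le12).
Qed.

Lemma big_addb_nat_pred1 (F : nat -> bool) n N :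
  \big[addb/false]_(0 <= k < N) (F k && (k == n)) = (n < N) && F n.
Proof.
elim: N => [|N IH]; first by rewrite big_geq.
rewrite big_nat_recr //= IH ltnS.
by case: (ltngtP n N) => [ltnN|ltNn|->] /=; rewrite ?andbF ?addbF ?andbT.
Qed.

Lemma clmul_bit a b i :
  bit (clmul a b) i = \big[addb/false]_(0 <= k < i.+1) (bit a (i - k) && bit b k).
Proof.
rewrite /clmul; under eq_bigr => n _ do rewrite -expnE big_xorbE.
rewrite bit_sum_pow2; case: ltnP => // hi; apply/esym/big1 => k _.
case: (leqP k b) => hkb; last by rewrite (bit_ge (ltnW hkb)) andbF.
by rewrite bit_ge //; lia.
Qed.

Lemma clmul_pow2r a n : clmul a (2 ^ n) = a * 2 ^ n.
Proof.
apply: bit_inj => i; rewrite clmul_bit bit_mul_pow2.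
under eq_bigr => k _ do rewrite bit_pow2.
by rewrite big_addb_nat_pred1 ltnS.
Qed.

Lemma clmul_divn_pow2 a e s n :
  e < 2 ^ s.+1 -> clmul a e %/ 2 ^ (s + n) = clmul (a %/ 2 ^ n) e %/ 2 ^ s.
Proof.
move=> he; apply: bit_inj => m; rewrite !bit_divn_pow2 !clmul_bit.
have high_e k : s.+1 <= k -> bit e k = false by exact: bit_small he.
rewrite (@big_addb_nat_tail _ _ s.+1) => [|k hk]; last by rewrite high_e ?andbF //; lia.
rewrite [RHS](@big_addb_nat_tail _ _ s.+1) => [|k hk]; last by rewrite high_e ?andbF //; lia.
apply: eq_big_nat => k /andP[_ hk]; rewrite bit_divn_pow2; congr (bit a _ && _); lia.
Qed.

Lemma cldm_aux_pow2_quot d n q r m :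
  (forall k, k < n -> bit q k = false) ->
  bit (cldm_aux n (2 ^ d) d (q, r)).1 m = if m < n then bit r (d + m) else bit q m.
Proof.
elim: n q r => [|n IH] q r hq //=; rewrite -!expnE.
case hr: (bit r (d + n)); rewrite IH => [|k hk].
- rewrite bit_xorn -expnD bit_pow2 eqn_add2l bit_lor bit_pow2.
  case: (ltngtP m n) => [ltmn|ltnm|->].
  + by rewrite addbF ltnS ltnW.
  + by rewrite orbF ltnS leqNgt ltnm.
  + by rewrite orbT ltnSn hr.
- by rewrite bit_lor bit_pow2 (hq k (ltnW hk)); apply: ltn_eqF.
- case: (ltngtP m n) => [ltmn|ltnm|->]; first by rewrite ltnS ltnW.
  + by rewrite ltnS leqNgt ltnm.
  + by rewrite ltnSn hr hq.
- exact: hq (ltnW hk).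
Qed.

Lemma cldiv_pow2 a d : cldiv a (2 ^ d) = a %/ 2 ^ d.
Proof.
apply: bit_inj => m; rewrite /cldiv /cldivmod.
have /negPf -> : 2 ^ d != 0 by rewrite expn_eq0.
have -> : degree (2 ^ d) = d by rewrite /degree expnE Nat.log2_pow2 //; lia.
rewrite cldm_aux_pow2_quot => [|k _]; last exact: bit0n.
rewrite bit_divn_pow2 addnC bit0n; case: ltnP => // ham.
by rewrite bit_ge //; lia.
Qed.

Lemma degree_xorn_pow2 d e : e < 2 ^ d -> degree (xorn (2 ^ d) e) = d.
Proof.
move=> he; apply: Nat.log2_bits_unique => [|m /ltP hdm].
- change (bit (xorn (2 ^ d) e) d = true).
  by rewrite bit_xorn bit_pow2 eqxx (bit_small he (leqnn d)).
- change (bit (xorn (2 ^ d) e) m = false).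
  by rewrite bit_xorn bit_pow2 (gtn_eqF hdm) (bit_small he (ltnW hdm)).
Qed.

(* The hypothesis says that each reduction step only xors e * 2^m < 2^d into
   the low part, so the steps taken are decided by the high bits of r alone. *)
Lemma cldm_aux_low_bits d e n q r j :
  (forall m, m < n -> bit r (d + m) -> e < 2 ^ (d - m)) -> j < d ->
  bit (cldm_aux n (xorn (2 ^ d) e) d (q, r)).2 j =
    bit r j (+) \big[addb/false]_(0 <= m < n) (bit r (d + m) && bit (e * 2 ^ m) j).
Proof.
elim: n q r => [|n IH] q r hr hj /=; first by rewrite big_geq ?addbF.
rewrite -!expnE big_nat_recr //=.
have shift i : i < d + n -> bit (xorn (2 ^ d) e * 2 ^ n) i = bit (e * 2 ^ n) i.
  move=> hi; rewrite !bit_mul_pow2 bit_xorn bit_pow2.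
  by case: (leqP n i) => // hni; rewrite (_ : (i - n == d) = false) //; apply/eqP; lia.
case hrn: (bit r (d + n)); last first.
  by rewrite IH ?addbF // => m hm; apply: hr; exact: ltnW.
have he := hr n (ltnSn n) hrn.
have high m : m < n -> bit (xorn r (xorn (2 ^ d) e * 2 ^ n)) (d + m) = bit r (d + m).
  move=> hm; rewrite bit_xorn shift; last lia.
  by rewrite bit_mul_pow2 (bit_small he) ?andbF ?addbF //; lia.
rewrite IH //; last by move=> m hm; rewrite high //; apply: hr; exact: ltnW.
rewrite bit_xorn shift; last lia.
rewrite (@eq_big_nat _ _ _ 0 n _ (fun m => bit r (d + m) && bit (e * 2 ^ m) j));
  last by move=> m /andP[_ hm]; rewrite high.
by rewrite andTb -addbA (addbC (bit (e * 2 ^ n) j)).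
Qed.

Lemma bit_clmul_shifts t e j N : t < N ->
  bit (clmul t e) j = \big[addb/false]_(0 <= m < N) (bit t m && bit (e * 2 ^ m) j).
Proof.
move=> htN; rewrite clmul_bit (@big_addb_nat_tail _ N j.+1) => [|m hm].
  rewrite big_nat_rev; apply: eq_big_nat => m /andP[_ hm].
  by rewrite add0n subSS bit_mul_pow2 subKn // (hm : m <= j).
rewrite bit_mul_pow2; case: (leqP m j) => hmj; last by rewrite andbF.
by rewrite bit_ge //; lia.
Qed.

Lemma bit_clmod_mul_pow2 d e t k j :
  t < 2 ^ k.+1 -> e < 2 ^ (d - k) -> j < d ->
  bit (clmod (t * 2 ^ d) (xorn (2 ^ d) e)) j = bit (clmul t e) j.
Proof.
move=> ht he hj.
have he_d : e < 2 ^ d by apply: leq_trans he _; rewrite leq_pexp2l ?leq_subr.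
have bd : bit (xorn (2 ^ d) e) d by rewrite bit_xorn bit_pow2 eqxx (bit_small he_d (leqnn d)).
have /negPf p_neq0 : xorn (2 ^ d) e != 0 by apply: contraTneq bd => ->; rewrite bit0n.
rewrite /clmod /cldivmod p_neq0 degree_xorn_pow2 // cldm_aux_low_bits //; last first.
  move=> m _; rewrite bit_mul_pow2 leq_addr addKn /= => htm.
  case: (leqP m k) => hmk; last by rewrite (bit_small ht hmk) in htm.
  by apply: leq_trans he _; rewrite leq_pexp2l ?leq_sub2l.
rewrite bit_mul_pow2 leqNgt hj /= (@bit_clmul_shifts _ _ _ (t * 2 ^ d).+1).
  by apply: eq_bigr => m _; rewrite bit_mul_pow2 leq_addr addKn.
by rewrite ltnS leq_pmulr // expn_gt0.
Qed.

Lemma cldiv_clmul_cldiv_pow2 a e s n : e < 2 ^ s.+1 ->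
  cldiv (clmul (cldiv a (2 ^ (s + n))) e) (2 ^ (s + n))
  = clmul (a %/ 2 ^ (s + n + n)) e %/ 2 ^ s.
Proof. by move=> he; rewrite !cldiv_pow2 clmul_divn_pow2 // -divnMA -expnD. Qed.

Definition fold_nibble (c : nat) : nat :=
  clmod (clmul c r_const %/ 2 ^ 4 * 2 ^ 64) p_const.

Lemma r_const_lt : r_const < 2 ^ 5.
Proof. by []. Qed.

(* Numerals such as 2 ^ 64 are unary: wherever unification might unfold r_const,
   p_const or fold_nibble, the proofs below use explicit congruences or
   generalize r_const, since evaluating them diverges. *)
Lemma fold_valE x : fold_val x = fold_nibble (x %/ 2 ^ 124).
Proof.
rewrite /fold_val /fold_nibble -!expnE; apply: (congr1 (clmod^~ p_const)).
apply: etrans (clmul_pow2r _ _) _; apply: (congr1 (muln^~ (2 ^ 64))).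
exact: (cldiv_clmul_cldiv_pow2 x 60 r_const_lt).
Qed.

Lemma clmul_r_const_divn_lt c : c < 2 ^ 4 -> clmul c r_const %/ 2 ^ 4 < 2 ^ 4.
Proof.
move=> hc; apply: ltn_pow2_bits => i hi; rewrite bit_divn_pow2 clmul_bit big1 // => k _.
case: (leqP 5 k) => hk; first by rewrite (bit_small r_const_lt hk) andbF.
by rewrite (bit_small hc) //; lia.
Qed.

Lemma bit_fold_nibble c j : c < 2 ^ 4 -> j < 64 ->
  bit (fold_nibble c) j = bit (clmul (clmul c r_const %/ 2 ^ 4) r_const) j.
Proof.
move=> hc hj; rewrite /fold_nibble /p_const -expnE.
by apply: (@bit_clmod_mul_pow2 _ _ _ 3) => //; exact: clmul_r_const_divn_lt.
Qed.

Lemma uniq_fold_nibble : uniq [seq fold_nibble c | c <- iota 0 16].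
Proof.
apply: (@map_uniq _ _ (fun v => [seq bit v j | j <- iota 0 4])); rewrite -map_comp.
(* clmul builds its result through powers of 2, so the low bits are rewritten
   into a purely boolean form before evaluation. *)
have /eq_in_map -> : {in iota 0 16, (fun v => [seq bit v j | j <- iota 0 4]) \o fold_nibble
    =1 fun c => [seq \big[addb/false]_(0 <= k < j.+1)
                    (\big[addb/false]_(0 <= l < (j - k + 4).+1)
                       (bit c (j - k + 4 - l) && bit r_const l) && bit r_const k)
                | j <- iota 0 4]}.
  move=> c; rewrite mem_iota => /andP[_ hc]; apply/eq_in_map => j.
  rewrite mem_iota => /andP[_ hj] /=.
  apply: etrans (bit_fold_nibble hc (leq_trans hj _)) _ => //; generalize r_const => r.
  by rewrite clmul_bit; apply: eq_bigr => k _; rewrite bit_divn_pow2 clmul_bit.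
by rewrite unlock; vm_compute.
Qed.

Theorem lemma7 :
  exists s : seq nat,
    uniq s /\ size s = 16 /\
    (forall v : nat, v \in s <-> exists x : nat, x < 2 ^ 128 /\ fold_val x = v).
Proof.
exists [seq fold_nibble c | c <- iota 0 16].
split; first exact: uniq_fold_nibble.
split; first by rewrite size_map size_iota.
move=> v; split.
- case/mapP => c; rewrite mem_iota => /andP[_ hc] ->.
  exists (c * 2 ^ 124); split; first exact: (@ltn_mul_pow2 _ 4).
  by rewrite fold_valE; apply: congr1; apply: mulnK; rewrite expn_gt0.
- case=> x [hx <-]; apply/mapP; exists (x %/ 2 ^ 124); last exact: fold_valE.
  by rewrite mem_iota; exact: (@ltn_divn_pow2 _ 4).
Qed.
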